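(* Let $Y_1,\dots,Y_J\subset\mathbb{R}^M$ be nonempty cones and let $Y=Y_1+\dots+Y_J$ (Minkowski sum). Suppose $p\in\mathbb{R}^M$ supports $Y$ at $y^*\in Y$ and $y^*=\sum_{j=1}^J y_j$ with $y_j\in Y_j$ for each $j$. Let $C$ be the smallest convex cone containing $\{y_1,\dots,y_J\}$. Then $p$ supports $Y$ at every $\bar{y}\in C$.
   Context: A set $Y\subset\mathbb{R}^M$ is a cone if $y\in Y$ and $\alpha\ge 0$ imply $\alpha y\in Y$ (not necessarily convex). A vector $p$ supports a cone $Y$ at $y^*\in Y$ if $p\cdot y^*\ge p\cdot y$ for all $y\in Y$. The Minkowski sum is $Y_1+\dots+Y_J=\{\sum_j z_j: z_j\in Y_j\}$. The smallest convex cone containing $\{y_j\}$ is $\{\sum_j\alpha_j y_j:\alpha_j\ge0\}$. *)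

From mathcomp Require Import all_boot all_order all_algebra.
Set Implicit Arguments. Unset Strict Implicit. Unset Printing Implicit Defensive.
Import Order.TTheory GRing.Theory Num.Theory.
Local Open Scope ring_scope.

Definition dotv (R : realFieldType) (M : nat) (p y : 'rV[R]_M) : R :=
  \sum_(i < M) p 0 i * y 0 i.

Definition is_cone (R : realFieldType) (M : nat) (Y : 'rV[R]_M -> Prop) : Prop :=
  forall (y : 'rV[R]_M) (a : R), Y y -> 0 <= a -> Y (a *: y).

Definition minkowski_sum (R : realFieldType) (M J : nat)
  (Y : 'I_J -> 'rV[R]_M -> Prop) : 'rV[R]_M -> Prop :=
  fun y => exists z : 'I_J -> 'rV[R]_M, (forall j, Y j (z j)) /\ y = \sum_(j < J) z j.

Definition supports (R : realFieldType) (M : nat) (Y : 'rV[R]_M -> Prop)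
  (p ys : 'rV[R]_M) : Prop :=
  Y ys /\ forall y, Y y -> dotv p y <= dotv p ys.

(* Smallest convex cone containing {v_1,...,v_J}: { sum_j a_j v_j : a_j >= 0 }. *)
Definition conv_cone (R : realFieldType) (M J : nat) (v : 'I_J -> 'rV[R]_M)
  : 'rV[R]_M -> Prop :=
  fun y => exists a : 'I_J -> R, (forall j, 0 <= a j) /\ y = \sum_(j < J) a j *: v j.

(** Replacing one summand [y_j] of [y*] by any [z] in [Y_j] gives another
    point of [Y], so each [y_j] maximises [p] over [Y_j].  As [Y_j] is a cone,
    comparing [y_j] with [0 *: y_j] and [2 *: y_j] forces [p.y_j = 0]; hence
    [p <= 0] on every [Y_j] and thus on [Y].  Finally [C] lies in [Y] (each
    [Y_j] is a cone) and [p] vanishes on [C], so every point of [C] is a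
    maximiser of [p] over [Y]. *)
From mathcomp Require Import all_boot all_order all_algebra.
Import Order.TTheory GRing.Theory Num.Theory.
Local Open Scope ring_scope.

Section Support.

Context {R : realFieldType} {M : nat}.
Implicit Types (p u v w : 'rV[R]_M) (Z : 'rV[R]_M -> Prop).

Lemma dotvZ p u a : dotv p (a *: u) = a * dotv p u.
Proof. by rewrite /dotv mulr_sumr; apply: eq_bigr => i _; rewrite mxE mulrCA. Qed.

Lemma dotv_sum (J : nat) p (f : 'I_J -> 'rV[R]_M) :
  dotv p (\sum_(j < J) f j) = \sum_(j < J) dotv p (f j).
Proof.
rewrite /dotv exchange_big /=; apply: eq_bigr => i _.
by rewrite summxE mulr_sumr.
Qed.

Lemma cone_argmax_dotv_eq0 Z p v :
  is_cone Z -> Z v -> (forall z, Z z -> dotv p z <= dotv p v) -> dotv p v = 0.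
Proof.
move=> coneZ Zv vmax; apply/eqP; rewrite eq_le; apply/andP; split.
  have := vmax _ (coneZ _ 2%:R Zv (ler0n _ _)).
  by rewrite dotvZ mulr_natl mulr2n gerDl.
by have := vmax _ (coneZ _ 0 Zv (lexx _)); rewrite dotvZ mul0r.
Qed.

Context {J : nat}.
Implicit Types (Y : 'I_J -> 'rV[R]_M -> Prop) (y : 'I_J -> 'rV[R]_M).

Lemma supports_minkowski_sum_argmax Y p y :
  supports (minkowski_sum Y) p (\sum_(j < J) y j) -> (forall j, Y j (y j)) ->
  forall j z, Y j z -> dotv p z <= dotv p (y j).
Proof.
move=> [_ ysum_max] Yy j z Yz.
pose y' i := if i == j then z else y i.
have Yy' : minkowski_sum Y (\sum_(i < J) y' i).
  by exists y'; split=> // i; rewrite /y'; case: eqP => [->|].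
have others : \sum_(i < J | i != j) dotv p (y' i) = \sum_(i < J | i != j) dotv p (y i).
  by apply: eq_bigr => i /negbTE; rewrite /y' => ->.
have := ysum_max _ Yy'; rewrite !dotv_sum (bigD1 j) //= [leRHS](bigD1 j) //=.
by rewrite others /y' eqxx lerD2r.
Qed.

Lemma minkowski_sum_dotv_le0 Y p w :
  (forall j z, Y j z -> dotv p z <= 0) -> minkowski_sum Y w -> dotv p w <= 0.
Proof.
move=> Yle0 [z [Yz ->]]; rewrite dotv_sum.
by apply: sumr_le0 => j _; exact: Yle0.
Qed.

Lemma conv_cone_minkowski_sum Y y w :
  (forall j, is_cone (Y j)) -> (forall j, Y j (y j)) ->
  conv_cone y w -> minkowski_sum Y w.
Proof.
move=> coneY Yy [a [a_ge0 ->]].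
by exists (fun j => a j *: y j); split=> // j; exact: coneY.
Qed.

Lemma conv_cone_dotv_eq0 y p w :
  (forall j, dotv p (y j) = 0) -> conv_cone y w -> dotv p w = 0.
Proof.
move=> py0 [a [_ ->]]; rewrite dotv_sum big1 // => j _.
by rewrite dotvZ py0 mulr0.
Qed.

End Support.

Theorem lemma4 (R : realFieldType) (M J : nat) (Y : 'I_J -> 'rV[R]_M -> Prop)
  (p ystar : 'rV[R]_M) (y : 'I_J -> 'rV[R]_M) :
  (forall j, is_cone (Y j)) ->
  (forall j, exists z, Y j z) ->
  supports (minkowski_sum Y) p ystar ->
  (forall j, Y j (y j)) ->
  ystar = \sum_(j < J) y j ->
  forall ybar, conv_cone y ybar -> supports (minkowski_sum Y) p ybar.
Proof.
move=> coneY _ p_supp Yy ystarE ybar Cybar; subst ystar.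
have y_argmax j z : Y j z -> dotv p z <= dotv p (y j).
  exact: supports_minkowski_sum_argmax.
have py0 j : dotv p (y j) = 0.
  exact: cone_argmax_dotv_eq0 (coneY j) (Yy j) (y_argmax j).
split; first exact: conv_cone_minkowski_sum Cybar.
have -> : dotv p ybar = 0 by exact: conv_cone_dotv_eq0 Cybar.
move=> w; apply: minkowski_sum_dotv_le0 => j z Yz.
by rewrite -(py0 j); exact: y_argmax.
Qed.
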